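(* Let $X$ be a real Banach space and $f:X\to\mathbb{R}\cup\{+\infty\}$ proper, convex and lsc. Then for every $(w,v^* )\in\mathrm{dom}\, f\times\mathrm{dom}\, f^*$, \[ f(w)+f^*(v^* ) = F_{\partial f}(w,v^* ) + K_{\partial f}(w,v^* ). \]
   Context: $f^*$ is the Fenchel conjugate. For $\varepsilon\ge0$, $\partial_\varepsilon f(x)=\{x^*: f(y)-f(x)\ge\langle y-x,x^*\rangle-\varepsilon\ \forall y\}$, and analogously $\partial_\varepsilon f^*(x^* )=\{y\in X: f^*(z^* )-f^*(x^* )\ge\langle y,z^*-x^*\rangle-\varepsilon\ \forall z^*\}$. Define $\partial_\varepsilon(f^*\oplus f)(x,x^* )=\{(y,y^* )\in X\times X^*: y^*\in\partial_a f(x),\ y\in\partial_b f^*(x^* )\text{ for some } a,b\ge0 \text{ with } a+b\le\varepsilon\}$ and $K_{\partial f}(x,x^* )=\inf\{\varepsilon\ge0: \mathrm{Gr}(\partial f)\cap\partial_\varepsilon(f^*\oplus f)(x,x^* )\neq\varnothing\}$. $F_{\partial f}(x,x^* )=\sup_{(y,y^* )\in\mathrm{Gr}(\partial f)}\{\langle y,x^*\rangle+\langle x,y^*\rangle-\langle y,y^*\rangle\}$. *)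

From HB Require Import structures.
From mathcomp Require Import all_boot all_order all_algebra.
From mathcomp Require Import all_classical all_reals all_analysis.
Set Implicit Arguments. Unset Strict Implicit. Unset Printing Implicit Defensive.
Import Order.TTheory GRing.Theory Num.Theory.
Import numFieldNormedType.Exports.
Local Open Scope classical_set_scope.
Local Open Scope ring_scope.

Section Fenchel.
Context {R : realType} {X : completeNormedModType R}.

(* Elements of the topological dual X^* : continuous linear functionals,
   represented as functions X -> R; <x, x^*> is written  xs x. *)
Definition is_dual (xs : X -> R) : Prop :=
  (forall (a : R) (x y : X), xs (a *: x + y) = a * xs x + xs y) /\ continuous xs.

Local Open Scope ereal_scope.

Definition proper_fun (f : X -> \bar R) : Prop :=
  (forall x, f x != -oo) /\ (exists x, f x < +oo).

Definition convex_fun (f : X -> \bar R) : Prop :=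
  forall (x y : X) (t : R), (0 < t < 1)%R ->
    f ((t *: x + (1 - t) *: y)%R) <= t%:E * f x + (1 - t)%:E * f y.

Definition dom (f : X -> \bar R) : set X := [set x | f x < +oo].

Definition conj (f : X -> \bar R) (xs : X -> R) : \bar R :=
  ereal_sup [set (xs x)%:E - f x | x in setT].

Definition dom_conj (f : X -> \bar R) : set (X -> R) :=
  [set xs | is_dual xs /\ conj f xs < +oo].

Definition esubdiff (eps : R) (f : X -> \bar R) (x : X) : set (X -> R) :=
  [set xs | is_dual xs /\
     forall y, f x + (xs (y - x)%R - eps)%:E <= f y].

Definition esubdiff_conj (eps : R) (f : X -> \bar R) (xs : X -> R) : set X :=
  [set y | forall zs, is_dual zs ->
     conj f xs + (zs y - xs y - eps)%:E <= conj f zs].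

Definition graph_subdiff (f : X -> \bar R) : set (X * (X -> R)) :=
  [set p | esubdiff 0 f p.1 p.2].

(* ∂_eps (f^* ⊕ f)(x, xs) *)
Definition esubdiff_sum (eps : R) (f : X -> \bar R) (x : X) (xs : X -> R)
  : set (X * (X -> R)) :=
  [set p | exists a b : R, [/\ (0 <= a)%R, (0 <= b)%R, (a + b <= eps)%R,
      esubdiff a f x p.2 & esubdiff_conj b f xs p.1]].

Definition K_subdiff (f : X -> \bar R) (x : X) (xs : X -> R) : \bar R :=
  ereal_inf [set eps%:E | eps in [set eps : R | (0 <= eps)%R /\
     (graph_subdiff f `&` esubdiff_sum eps f x xs) !=set0]].

Definition F_subdiff (f : X -> \bar R) (x : X) (xs : X -> R) : \bar R :=
  ereal_sup [set (xs p.1 + p.2 x - p.2 p.1)%:E | p in graph_subdiff f].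

End Fenchel.

(* For [(y, y^* )] in the graph of [∂f], the Fenchel-Young equality
   [f y + f^* y^* = <y, y^*>] splits the gap
   [f w + f^* v^* - (<y, v^*> + <w, y^*> - <y, y^*>)] into the defect [a] of the
   subgradient inequality of [y^*] tested at [w] and the defect [b] of the
   Fenchel-Young inequality for [(y, v^* )]; these are the least [a] and [b] with
   [y^* ∈ ∂_a f(w)] and [y ∈ ∂_b f^*(v^* )]. So [K_{∂f}(w, v^* )] is the infimum of the
   gap over the graph, i.e. [f w + f^* v^* - F_{∂f}(w, v^* )].
   This needs a nonempty graph (otherwise [F = -oo] and [K = +oo]), which is the
   Brondsted-Rockafellar theorem: Ekeland's principle applied to [f - v^*] gives a
   point where [f - v^*] is calm with constant 1, and by Hahn-Banach a convex function
   that is calm at a point has a subgradient there. *)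

From HB Require Import structures.
From mathcomp Require Import all_boot all_order all_algebra.
From mathcomp Require Import all_classical all_reals all_analysis.
From mathcomp Require Import ring lra.
Import Order.TTheory GRing.Theory Num.Theory.
Import numFieldNormedType.Exports.
Local Open Scope classical_set_scope.
Local Open Scope ring_scope.
Set Implicit Arguments. Unset Strict Implicit. Unset Printing Implicit Defensive.

Section RealInf.
Variable R : realType.

Lemma inf_img_le (T : Type) (I : set T) (a : T -> R) (c : R) (i : T) :
  (forall j, I j -> c <= a j) -> I i -> inf (a @` I) <= a i.
Proof.
move=> ca Ii; apply: ge_inf; last by exists i.
by exists c => _ [j Ij <-]; exact: ca.
Qed.

Lemma le_inf_img (T : Type) (I : set T) (a : T -> R) (c : R) :
  I !=set0 -> (forall i, I i -> c <= a i) -> c <= inf (a @` I).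
Proof.
move=> [i Ii] ca; apply: lb_le_inf; first by exists (a i), i.
by move=> _ [j Ij <-]; exact: ca.
Qed.

Lemma exists_natSinv_lt (e : R) : 0 < e -> exists n : nat, n.+1%:R^-1 < e.
Proof.
by move=> e0; have [n _ ne] := near_infty_natSinv_lt (PosNum e0); exists n; apply: ne => /=.
Qed.

Lemma inf_upper_set_subl (A : set R) (c : R) : A !=set0 -> has_ubound A ->
  inf [set e | exists2 x, A x & c - x <= e] = c - sup A.
Proof.
move=> A0 ubA; set E := [set e | _].
have lbE : lbound E (c - sup A).
  by move=> e [x Ax]; apply: le_trans; rewrite lerB // ub_le_sup.
have cxE x : A x -> E (c - x) by exists x.
apply/le_anti/andP; split; last first.
  by apply: lb_le_inf => //; have [x /cxE] := A0; exists (c - x).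
suff : sup A <= c - inf E by lra.
apply: ge_sup => // x Ax; suff : inf E <= c - x by lra.
by apply: ge_inf; [exists (c - sup A) | exact: cxE].
Qed.

End RealInf.

Section Sublinear.
Variables (R : realType) (V : lmodType R).

Definition sublinear (q : V -> R) :=
  (forall x y, q (x + y) <= q x + q y) /\
  (forall (t : R) x, 0 <= t -> q (t *: x) = t * q x).

Lemma sublinear0 q : sublinear q -> q 0 = 0.
Proof. by move=> [_ qZ]; rewrite -(scale0r (0 : V)) qZ // mul0r. Qed.

Lemma sublinear_ge_oppN q : sublinear q -> forall x, - q (- x) <= q x.
Proof. by move=> sq x; have := sq.1 x (- x); rewrite subrr (sublinear0 sq); lra. Qed.

Lemma homogeneous_of_le (q : V -> R) :
  (forall t x, 0 < t -> q (t *: x) <= t * q x) ->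
  forall t x, 0 <= t -> q (t *: x) = t * q x.
Proof.
move=> qZ t x; rewrite le_eqVlt => /orP[/eqP <-|t0].
  have two_gt0 : (0 : R) < 2 by [].
  have half_gt0 : (0 : R) < 2^-1 by rewrite invr_gt0.
  have := qZ 2 0 two_gt0; have := qZ 2^-1 0 half_gt0.
  by rewrite !scaler0 scale0r mul0r; lra.
have ti : 0 < t^-1 by rewrite invr_gt0.
apply/le_anti; rewrite qZ //=.
have := qZ t^-1 (t *: x) ti; rewrite scalerA mulVf ?gt_eqF // scale1r => qx.
by rewrite -(ler_pM2l ti) mulrA mulVf ?gt_eqF // mul1r.
Qed.

Lemma sublinear_inf (T : Type) (I : set T) (a : T -> V -> R) :
  I !=set0 -> (forall x, exists c, forall i, I i -> c <= a i x) ->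
  (forall i j, I i -> I j -> exists2 k, I k & forall x y, a k (x + y) <= a i x + a j y) ->
  (forall t i, 0 < t -> I i -> exists2 k, I k & forall x, a k (t *: x) <= t * a i x) ->
  sublinear (fun x => inf [set a i x | i in I]).
Proof.
move=> I0 alb aD aZ.
have inf_le x i : I i -> inf [set a j x | j in I] <= a i x.
  by have [c ca] := alb x; exact: inf_img_le ca.
split=> [x y|] /=.
  rewrite -lerBlDr; apply: le_inf_img => // i Ii; rewrite lerBlDr -lerBlDl.
  apply: le_inf_img => // j Ij; rewrite lerBlDl.
  by have [k Ik /(_ x y) akD] := aD i j Ii Ij; exact: le_trans (inf_le _ _ Ik) akD.
apply: homogeneous_of_le => t x t0.
rewrite -ler_pdivrMl //; apply: le_inf_img => // i Ii; rewrite ler_pdivrMl //.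
by have [k Ik /(_ x) akZ] := aZ t i t0 Ii; exact: le_trans (inf_le _ _ Ik) akZ.
Qed.

Lemma sublinear_odd_linear q : sublinear q -> (forall x, q (- x) = - q x) ->
  forall a x y, q (a *: x + y) = a * q x + q y.
Proof.
move=> sq qN.
have qD x y : q (x + y) = q x + q y.
  apply/le_anti; rewrite sq.1 /=.
  by have := sq.1 (- x) (- y); rewrite -opprD !qN; lra.
move=> a x y; rewrite qD; congr (_ + _).
have [a0|a0] := leP 0 a; first by rewrite sq.2.
have -> : a *: x = (- a) *: (- x) by rewrite scaleNr scalerN opprK.
by rewrite sq.2 ?oppr_ge0 ?ltW // qN mulrNN.
Qed.

(* [x |-> inf_(t >= 0) q (x + t z) - t q z] is sublinear and below [q], hence equal to
   [q]; its value at [- z] is at most [q (- z + z) - q z = - q z]. *)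
Lemma minimal_sublinear_odd q : sublinear q ->
  (forall q', sublinear q' -> (forall x, q' x <= q x) -> forall x, q x <= q' x) ->
  forall z, q (- z) = - q z.
Proof.
move=> sq qmin z.
pose a (t : R) x := q (x + t *: z) - t * q z.
have alb x t : 0 <= t -> - q (- x) <= a t x.
  move=> t0; rewrite /a -sq.2 //.
  by have := sq.1 (x + t *: z) (- x); rewrite addrAC subrr add0r; lra.
have sqz : sublinear (fun x => inf [set a t x | t in [set t | 0 <= t]]).
  apply: sublinear_inf => [|x|s t s0 t0|r t r0 t0].
  - by exists 0 => /=.
  - by exists (- q (- x)) => t; exact: alb.
  - exists (s + t) => [|x y]; first exact: addr_ge0.
    have := sq.1 (x + s *: z) (y + t *: z).
    by rewrite /a addrACA -scalerDl mulrDl; lra.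
  - exists (r * t) => [|x]; first exact: mulr_ge0 (ltW r0) t0.
    by rewrite /a -scalerA -scalerDr (sq.2 _ _ (ltW r0)) -mulrA -mulrBr.
have inf_le x t : 0 <= t -> inf [set a s x | s in [set s | 0 <= s]] <= a t x.
  by move=> t0; apply: (@inf_img_le _ _ _ _ (- q (- x))) => // s; exact: alb.
have qz_le_q x : inf [set a t x | t in [set t | 0 <= t]] <= q x.
  by have := inf_le x 0 (lexx 0); rewrite /a scale0r addr0 mul0r subr0.
have := qmin _ sqz qz_le_q (- z).
have := inf_le (- z) 1 ler01; rewrite /a scale1r addNr (sublinear0 sq) mul1r.
have := sublinear_ge_oppN sq z; lra.
Qed.

Lemma exists_minimal_sublinear p : sublinear p -> exists2 q, sublinear q &
  [/\ forall x, q x <= p x &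
     forall q', sublinear q' -> (forall x, q' x <= q x) -> forall x, q x <= q' x].
Proof.
move=> sp.
pose T := {q : V -> R | sublinear q /\ forall x, q x <= p x}.
pose below (q q' : T) := `[< forall x, sval q' x <= sval q x >].
pose top : T := exist _ p (Logic.conj sp (fun=> lexx _)).
have sT (q : T) : sublinear (sval q) := proj1 (svalP q).
have [||A Atot|m mmax] := @ZL_preorder T top below.
- by move=> q; apply/asboolP.
- move=> q1 q2 q3 /asboolP q12 /asboolP q23; apply/asboolP => x.
  exact: le_trans (q23 x) (q12 x).
- have [[q0 Aq0]|A0] := pselect (A !=set0); last first.
    by exists top => q Aq; exfalso; apply: A0; exists q.
  have lbA x (q : T) : - p (- x) <= sval q x.
    have := sublinear_ge_oppN (sT q) x; have := proj2 (svalP q) (- x); lra.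
  have sm : sublinear (fun x => inf [set sval q x | q in A]).
    apply: sublinear_inf => [|x|q q' Aq Aq'|t q t0 Aq].
    - by exists q0.
    - by exists (- p (- x)) => q _; exact: lbA.
    - have [|] := Atot q q' Aq Aq' => /asboolP qq'.
        exists q' => // x y; apply: le_trans ((sT q').1 x y) _.
        by rewrite lerD2r.
      exists q => // x y; apply: le_trans ((sT q).1 x y) _.
      by rewrite lerD2l.
    - by exists q => // x; rewrite ((sT q).2 _ _ (ltW t0)).
  have inf_le x q : A q -> inf [set sval q x | q in A] <= sval q x.
    by move=> Aq; apply: (@inf_img_le _ _ _ _ (- p (- x))) => // q' _; exact: lbA.
  have mp x : inf [set sval q x | q in A] <= p x.
    exact: le_trans (inf_le x q0 Aq0) (proj2 (svalP q0) x).
  exists (exist _ (fun x => inf [set sval q x | q in A]) (Logic.conj sm mp)).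
  by move=> q Aq; apply/asboolP => x; exact: inf_le.
- have [sm mp] := svalP m; exists (sval m) => //; split => // q' sq' q'm x.
  have q'p y : q' y <= p y by exact: le_trans (q'm y) (mp y).
  by have /asboolP := mmax (exist _ q' (Logic.conj sq' q'p)) (asboolT q'm); exact.
Qed.

Lemma hahn_banach_sublinear p : sublinear p -> exists2 l : V -> R,
  (forall a x y, l (a *: x + y) = a * l x + l y) & forall x, l x <= p x.
Proof.
move=> sp; have [q sq [qp qmin]] := exists_minimal_sublinear sp.
by exists q => //; apply: sublinear_odd_linear => //; exact: minimal_sublinear_odd.
Qed.

End Sublinear.

Section Semicontinuity.
Variable R : realType.

Lemma lipschitz1_continuous (V : normedModType R) (h : V -> R) :
  (forall x z, `|h x - h z| <= `|x - z|) -> continuous h.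
Proof.
move=> hlip x; apply/cvgrPdist_lt => e e0.
apply: filterS (nbhsx_ballx x e e0) => z; rewrite -ball_normE /= => xz.
exact: le_lt_trans (hlip x z) xz.
Qed.

Lemma linear_le_norm_continuous (V : normedModType R) (l : V -> R) :
  (forall c x z, l (c *: x + z) = c * l x + l z) -> (forall x, l x <= `|x|) ->
  continuous l.
Proof.
move=> l_lin l_le; apply: lipschitz1_continuous => x z.
have lB w1 w2 : l (w1 - w2) = l w1 - l w2.
  by have := l_lin (-1) w2 w1; rewrite scaleN1r mulN1r (addrC (- w2)) (addrC (- l w2)).
have := l_le (x - z); have := l_le (z - x); rewrite !lB (distrC z x) ler_norml.
by move=> ? ?; apply/andP; split; lra.
Qed.

Local Open Scope ereal_scope.

Lemma lower_semicontinuousDr (T : topologicalType) (f : T -> \bar R) (h : T -> R) :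
  lower_semicontinuous f -> continuous h ->
  lower_semicontinuous (fun x => f x + (h x)%:E).
Proof.
move=> lsc_f ch x a afx.
have [d [d0 fxd]] : exists d : R, (0 < d)%R /\ (a - h x + d)%:E < f x.
  move: afx; case: (f x) => [r| |] //= afx; last by exists 1%R; rewrite ltry.
  exists ((r + h x - a) / 2)%R; rewrite -EFinD lte_fin in afx; rewrite lte_fin.
  split; lra.
have [U Ux Uf] := lsc_f x _ fxd.
exists (U `&` h @^-1` ball (h x) d); first exact: filterI Ux (ch x _ (nbhsx_ballx _ _ d0)).
move=> z [/Uf fz]; rewrite -ball_normE /= => /ltr_normlW hz.
move: fz; case: (f z) => [r| |] //= fz; last by rewrite addye // ltry.
by rewrite -EFinD lte_fin; rewrite lte_fin in fz; lra.
Qed.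

Lemma lower_semicontinuous_closed_le (T : topologicalType) (f : T -> \bar R) (b : R) :
  lower_semicontinuous f -> closed [set x | f x <= b%:E].
Proof.
move=> /lower_semicontinuousP /(_ b); rewrite -closedC.
by congr closed; apply/funext => x /=; rewrite leNgt; apply/propext; split => /negP.
Qed.

End Semicontinuity.

Section Ekeland.
Variables (R : realType) (X : completeNormedModType R).

Section EkelandReal.
Variables (D : set X) (G : X -> R) (c : R) (x0 : X).
Hypotheses (Dx0 : D x0) (G_ge : forall x, D x -> c <= G x)
  (closed_slice : forall x b, closed [set z | D z /\ G z + `|z - x| <= b]).

Let S x z := D z /\ G z + `|z - x| <= G x.

Let S_refl x : D x -> S x x.
Proof. by move=> Dx; split => //; rewrite subrr normr0 addr0. Qed.

Let S_trans x y z : S x y -> S y z -> S x z.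
Proof. by move=> [_ Sxy] [Dz Syz]; split => //; have := ler_distD y z x; lra. Qed.

(* Each step picks a point of the slice [S x] whose value is nearly [inf_(S x) G];
   this forces the slice of the new point into a ball of radius [1/(n+1)]. *)
Let ekeland_sequence : exists u : nat -> X, u 0%N = x0 /\
  forall n, S (u n) (u n.+1) /\ forall z, S (u n.+1) z -> `|z - u n.+1| <= n.+1%:R^-1.
Proof.
pose m x := inf [set G z | z in S x].
have m_le x z : S x z -> m x <= G z.
  by move=> Sz; apply: (@inf_img_le _ _ _ _ c) => // y [Dy _]; exact: G_ge.
have near_inf (p : X * nat) : exists z, D p.1 -> S p.1 z /\ G z <= m p.1 + p.2.+1%:R^-1.
  case: p => x n /=; have [Dx|] := pselect (D x); last by exists x.
  have /inf_lt[|_ [z Sz <-] Gz] : m x < m x + n.+1%:R^-1 by rewrite ltrDl.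
    by exists (G x), x => //; exact: S_refl.
  by exists z => _; split => //; exact: ltW.
have [next nextP] := choice near_inf.
pose u := fix u n := if n is n'.+1 then next (u n', n') else x0.
have Du n : D (u n) by elim: n => [|n IH] //=; exact: (nextP (u n, n) IH).1.1.
exists u; split => // n.
have [Sn Gn] : S (u n) (u n.+1) /\ G (u n.+1) <= m (u n) + n.+1%:R^-1.
  exact: nextP (u n, n) (Du n).
split => // z Sz; rewrite -(lerD2l (G z)); apply: le_trans Sz.2 (le_trans Gn _).
by rewrite lerD2r; exact: m_le (S_trans Sn Sz).
Qed.

Lemma ekeland_real : exists y, D y /\ forall z, D z -> G y <= G z + `|z - y|.
Proof.
have [u [u0 uP]] := ekeland_sequence.
have Du n : D (u n) by case: n => [|n]; [rewrite u0 | exact: (uP n).1.1].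
have S_chain n k : S (u n) (u (k + n)%N).
  elim: k => [|k IH]; first exact: S_refl.
  by apply: S_trans IH _; rewrite addSn; exact: (uP _).1.
have S_near n : \forall k \near \oo, S (u n) (u k).
  by exists n => // k /= nk; rewrite -(subnK nk); exact: S_chain.
have cvg_u : cvg (u @ \oo).
  apply/cauchy_cvgP/cauchy_exP => e e0; have [N Ne] := exists_natSinv_lt e0.
  exists (u N.+1); apply: filterS (S_near N.+1) => k Sk.
  by rewrite -ball_normE /= distrC; exact: le_lt_trans ((uP N).2 _ Sk) Ne.
set y := lim (u @ \oo) in cvg_u.
have Sy n : S (u n) y.
  exact: closed_cvg _ (@closed_slice (u n) (G (u n))) (S_near n) _ cvg_u.
exists y; split; first by have [] := Sy 0%N.
move=> z Dz; rewrite leNgt; apply/negP => zy.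
have Syz : S y z by split => //; exact: ltW.
have dist_small n : `|z - y| <= n.+1%:R^-1 + n.+1%:R^-1.
  have := (uP n).2 _ (S_trans (Sy n.+1) Syz); have := (uP n).2 _ (Sy n.+1).
  have := ler_distD (u n.+1) z y; rewrite (distrC (u n.+1) y).
  by set e := n.+1%:R^-1; lra.
have zy0 : `|z - y| = 0.
  apply/le_anti; rewrite normr_ge0 andbT leNgt; apply/negP => pos.
  have [n ne] := exists_natSinv_lt (divr_gt0 pos (ltr0Sn _ 1)).
  by have := dist_small n; set a := n.+1%:R^-1 in ne *; lra.
by move: zy; move/normr0_eq0/subr0_eq: zy0 => ->; rewrite subrr normr0 addr0 ltxx.
Qed.

End EkelandReal.

Local Open Scope ereal_scope.

Lemma lty_fineK (g : X -> \bar R) x : proper_fun g -> g x < +oo -> (fine (g x))%:E = g x.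
Proof. by move=> [gN _] gx; rewrite fineK // fin_numE gN /= lt_eqF. Qed.

Lemma ekeland (g : X -> \bar R) : proper_fun g -> lower_semicontinuous g ->
  (exists c : R, forall x, c%:E <= g x) ->
  exists y, g y < +oo /\ forall z, g y <= g z + (`|z - y|)%:E.
Proof.
move=> pg lsc_g [c gc]; have [gN [x0 gx0]] := pg.
have gE x : g x < +oo -> g x = (fine (g x))%:E by move=> gx; rewrite lty_fineK.
have slice x b : [set z | g z < +oo /\ (fine (g z) + `|z - x| <= b)%R] =
                 [set z | g z + (`|z - x|)%:E <= b%:E].
  apply/funext => z /=; apply/propext; split => [[gz]|].
    by rewrite (gE z gz) -EFinD lee_fin.
  by move: (gN z); case: (g z) => [r| |] //= _; rewrite -EFinD lee_fin; split => //; exact: ltry.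
have [x|x b|y [gy yP]] := @ekeland_real [set x | g x < +oo] (fun x => fine (g x)) c _ gx0.
- by move=> gx; rewrite -lee_fin -gE.
- rewrite slice; apply: lower_semicontinuous_closed_le.
  apply: lower_semicontinuousDr => //; apply: lipschitz1_continuous => z1 z2.
  by have := ler_dist_dist (z1 - x)%R (z2 - x)%R; rewrite opprB addrA subrK.
exists y; split => // z; have [gz|] := pselect (g z < +oo).
  by rewrite (gE y gy) (gE z gz) -EFinD lee_fin; exact: yP.
by move/negP; rewrite -leNgt leye_eq => /eqP ->; rewrite addye // leey.
Qed.

End Ekeland.

Section CalmPoint.
Variables (R : realType) (V : normedModType R) (D : set V) (G : V -> R) (y : V).
Hypotheses (Dy : D y)
  (convex_G : forall u1 u2 t, D u1 -> D u2 -> 0 < t < 1 ->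
     D (t *: u1 + (1 - t) *: u2) /\ G (t *: u1 + (1 - t) *: u2) <= t * G u1 + (1 - t) * G u2)
  (calm : forall u, D u -> G y <= G u + `|u - y|).

(* [x |-> inf_(p in I) a p x] is the infimal convolution of the norm with the conic
   hull of [v |-> G (y + v) - G y]; calmness at [y] bounds it below by [- |x|]. *)
Let I := [set p : R * V | 0 < p.1 /\ D p.2].
Let a (p : R * V) x := p.1 * (G p.2 - G y) + `|x - p.1 *: (p.2 - y)|.

Let a_ge x p : I p -> - `|x| <= a p x.
Proof.
case: p => s u [/= s0 Du]; rewrite /a /=.
have : s * (G y - G u) <= s * `|u - y| by rewrite ler_pM2l //; have := calm Du; lra.
have := ler_distD x 0 (s *: (u - y)); rewrite sub0r normrN add0r normrN normrZ gtr0_norm //.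
rewrite !mulrBr; lra.
Qed.

(* [s1 (u1 - y) + s2 (u2 - y) = (s1 + s2) (u - y)] for the convex combination [u] of
   [u1] and [u2] with weights proportional to [s1] and [s2]. *)
Let a_subadditive p1 p2 : I p1 -> I p2 ->
  exists2 p, I p & forall x1 x2, a p (x1 + x2) <= a p1 x1 + a p2 x2.
Proof.
case: p1 p2 => [s1 u1] [s2 u2] [/= s10 Du1] [/= s20 Du2].
have s0 : 0 < s1 + s2 by rewrite addr_gt0.
pose t := s1 / (s1 + s2).
have t01 : 0 < t < 1 by rewrite divr_gt0 //= ltr_pdivrMr // mul1r ltrDl.
have st1 : (s1 + s2) * t = s1 by rewrite mulrCA mulfV ?gt_eqF // mulr1.
have st2 : (s1 + s2) * (1 - t) = s2 by rewrite mulrBr mulr1 st1 addrAC subrr add0r.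
clearbody t.
have [Du Gu] := convex_G Du1 Du2 t01.
exists (s1 + s2, t *: u1 + (1 - t) *: u2) => // x1 x2; rewrite /a /=.
have -> : (s1 + s2) *: (t *: u1 + (1 - t) *: u2 - y) = s1 *: (u1 - y) + s2 *: (u2 - y).
  by rewrite !scalerBr scalerDr !scalerA st1 st2 scalerDl opprD addrACA.
have : (s1 + s2) * (G (t *: u1 + (1 - t) *: u2) - G y) <=
       s1 * (G u1 - G y) + s2 * (G u2 - G y).
  have : (s1 + s2) * (G (t *: u1 + (1 - t) *: u2) - G y) <=
         (s1 + s2) * (t * (G u1 - G y) + (1 - t) * (G u2 - G y)).
    by rewrite ler_pM2l //; lra.
  by move/le_trans; apply; rewrite mulrDr !mulrA st1 st2.
have : `|x1 + x2 - (s1 *: (u1 - y) + s2 *: (u2 - y))| <=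
       `|x1 - s1 *: (u1 - y)| + `|x2 - s2 *: (u2 - y)|.
  by rewrite opprD addrACA ler_normD.
lra.
Qed.

Lemma calm_convex_linear_minorant : exists l : V -> R,
  [/\ forall c x z, l (c *: x + z) = c * l x + l z, forall x, l x <= `|x| &
      forall u, D u -> l (u - y) <= G u - G y].
Proof.
have Iy : I (1, y) by split => //=; exact: ltr01.
have inf_le x p : I p -> inf [set a p x | p in I] <= a p x.
  by move=> Ip; apply: (@inf_img_le _ _ _ _ (- `|x|)) => // p' Ip'; exact: a_ge.
have sq : sublinear (fun x => inf [set a p x | p in I]).
  apply: sublinear_inf => [|x|p1 p2 Ip1 Ip2|r [s u] r0 [/= s0 Du]].
  - by exists (1, y).
  - by exists (- `|x|) => p; exact: a_ge.
  - exact: a_subadditive.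
  - exists (r * s, u) => [|x]; first by split => //=; exact: mulr_gt0.
    by rewrite /a /= -scalerA -scalerBr normrZ gtr0_norm // -mulrA -mulrDr.
have [l l_lin l_le] := hahn_banach_sublinear sq.
exists l; split => // [x|u Du].
  apply: le_trans (l_le x) (le_trans (inf_le x _ Iy) _).
  by rewrite /a /= subrr mulr0 add0r subrr scaler0 subr0.
apply: le_trans (l_le _) (le_trans (inf_le _ (1, u) _) _); first by split => //=; exact: ltr01.
by rewrite /a /= mul1r scale1r subrr normr0 addr0.
Qed.

End CalmPoint.

Section Dual.
Variables (R : realType) (X : completeNormedModType R) (vs : X -> R).
Hypothesis dual_vs : is_dual vs.

Lemma dual0 : vs 0 = 0.
Proof. by have := dual_vs.1 1 0 0; rewrite scale1r addr0 mul1r; lra. Qed.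

Lemma dualD x y : vs (x + y) = vs x + vs y.
Proof. by have := dual_vs.1 1 x y; rewrite scale1r mul1r. Qed.

Lemma dualZ c x : vs (c *: x) = c * vs x.
Proof. by have := dual_vs.1 c x 0; rewrite !addr0 dual0 addr0. Qed.

Lemma dualB x y : vs (x - y) = vs x - vs y.
Proof. by rewrite dualD -scaleN1r dualZ mulN1r. Qed.

End Dual.

Section Conjugate.
Variables (R : realType) (X : completeNormedModType R).
Local Open Scope ereal_scope.

Lemma conj_ge (f : X -> \bar R) (vs : X -> R) x : (vs x)%:E - f x <= conj f vs.
Proof. by apply: ereal_sup_ubound; exists x. Qed.

Lemma conj_fin_num (f : X -> \bar R) (vs : X -> R) :
  proper_fun f -> conj f vs < +oo -> conj f vs \is a fin_num.
Proof.
move=> pf fvs; have [_ [x fx]] := pf.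
rewrite fin_numE (lt_eqF fvs) andbT; have := conj_ge f vs x.
by rewrite -(lty_fineK pf fx) -EFinB; case: (conj f vs).
Qed.

Lemma graph_subdiff_conj (f : X -> \bar R) (p : X * (X -> R)) :
  proper_fun f -> graph_subdiff f p ->
  f p.1 < +oo /\ conj f p.2 = (p.2 p.1 - fine (f p.1))%:E.
Proof.
move=> pf [dual_p sub_p]; have [fN [x0 fx0]] := pf.
have fp : f p.1 < +oo.
  have := sub_p x0; case: (f p.1) (fN p.1) => [r _ _| _|//]; first exact: ltry.
  by rewrite addye // => /le_lt_trans /(_ fx0); rewrite ltxx.
split => //; have fr : f p.1 = (fine (f p.1))%:E by rewrite lty_fineK.
apply/le_anti/andP; split; last by have := conj_ge f p.2 p.1; rewrite {1}fr -EFinB.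
apply: ge_ereal_sup => _ [x _ <-]; have := sub_p x; rewrite fr (dualB dual_p).
case: (f x) (fN x) => [r| |] //= _; last by rewrite leNye.
by rewrite -EFinD -EFinB !lee_fin; lra.
Qed.

Lemma convex_fun_dom (f : X -> \bar R) u1 u2 t : proper_fun f -> convex_fun f ->
  f u1 < +oo -> f u2 < +oo -> (0 < t < 1)%R ->
  f (t *: u1 + (1 - t) *: u2)%R < +oo /\
  (fine (f (t *: u1 + (1 - t) *: u2)) <= t * fine (f u1) + (1 - t) * fine (f u2))%R.
Proof.
move=> pf cf fu1 fu2 t01; have := cf u1 u2 t t01.
rewrite -(lty_fineK pf fu1) -(lty_fineK pf fu2) -!EFinM -EFinD => fu.
have fu_fin := le_lt_trans fu (ltry _); split => //.
by rewrite -lee_fin (lty_fineK pf fu_fin).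
Qed.

Lemma graph_subdiff_neq0 (f : X -> \bar R) (vs : X -> R) :
  proper_fun f -> convex_fun f -> lower_semicontinuous f ->
  is_dual vs -> conj f vs < +oo -> graph_subdiff f !=set0.
Proof.
move=> pf cf lsc_f dual_vs fvs; have [fN [x0 fx0]] := pf.
pose g x := f x + (- vs x)%:E.
have g_lsc : lower_semicontinuous g.
  by apply: lower_semicontinuousDr => // x; apply: continuousN; exact: dual_vs.2.
have g_ge x : (- fine (conj f vs))%:E <= g x.
  have := conj_ge f vs x; rewrite -(fineK (conj_fin_num pf fvs)) /g.
  case: (f x) (fN x) => [r| |] //= _; last by rewrite addye // leey.
  by rewrite -EFinB -EFinD !lee_fin; lra.
have pg : proper_fun g.
  split=> [x|]; first by rewrite /g; case: (f x) (fN x).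
  by exists x0; rewrite /g -(lty_fineK pf fx0) -EFinD ltry.
have [y [gy y_min]] := ekeland pg g_lsc (ex_intro _ _ g_ge).
have fy : f y < +oo.
  by move: gy; rewrite /g; case: (f y) (fN y) => // r _ _; exact: ltry.
pose G x := (fine (f x) - vs x)%R.
have gG x : f x < +oo -> g x = (G x)%:E by move=> fx; rewrite /g -(lty_fineK pf fx).
have [u v t fu fv t01|u fu|l [l_lin l_le l_sub]] :=
  @calm_convex_linear_minorant _ _ [set x | f x < +oo] G y fy.
- have [fw Gw] := convex_fun_dom pf cf fu fv t01; split => //.
  by rewrite /G !(dualD dual_vs) !(dualZ dual_vs); lra.
- by have := y_min u; rewrite !gG // -EFinD lee_fin.
have l_cont := linear_le_norm_continuous l_lin l_le.
exists (y, fun x => (l x + vs x)%R); split.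
  split=> [c x z|x] /=; first by have := l_lin c x z; have := dual_vs.1 c x z; lra.
  exact: cvgD (l_cont x) (dual_vs.2 x).
move=> u /=; have [fu|] := pselect (f u < +oo); last first.
  by move/negP; rewrite -leNgt leye_eq => /eqP ->; exact: leey.
rewrite -(lty_fineK pf fu) -(lty_fineK pf fy) -EFinD lee_fin.
have := l_sub _ fu; rewrite /G (dualB dual_vs); lra.
Qed.

End Conjugate.

Section GraphGap.
Variables (R : realType) (X : completeNormedModType R) (f : X -> \bar R) (w : X) (vs : X -> R).
Hypotheses (pf : proper_fun f) (fw : (f w < +oo)%E) (fvs : (conj f vs < +oo)%E).

Lemma graph_esubdiff_sumE (p : X * (X -> R)) (eps : R) : graph_subdiff f p ->
  (0 <= eps /\ esubdiff_sum eps f w vs p) <->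
  fine (f w) + fine (conj f vs) - (vs p.1 + p.2 w - p.2 p.1) <= eps.
Proof.
move=> Gp; have [fp conj_p] := graph_subdiff_conj pf Gp; have [dual_p sub_p] := Gp.
have fwE : f w = (fine (f w))%:E by rewrite lty_fineK.
have fpE : f p.1 = (fine (f p.1))%:E by rewrite lty_fineK.
have fvsE : conj f vs = (fine (conj f vs))%:E by rewrite fineK // conj_fin_num.
set Fw := fine (f w) in fwE *; set Fp := fine (f p.1) in fpE conj_p *.
set Cv := fine (conj f vs) in fvsE *.
have sub_w : p.2 w - Fw <= p.2 p.1 - Fp.
  by have := sub_p w; rewrite fwE fpE (dualB dual_p) -EFinD lee_fin; lra.
have young_v : vs p.1 - Fp <= Cv.
  by have := conj_ge f vs p.1; rewrite fpE fvsE -EFinB lee_fin.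
split=> [[eps0 [a [b [a0 b0 ab [_ sub_a] sub_b]]]]|gap_le].
  have := sub_a p.1; rewrite fwE fpE (dualB dual_p) -EFinD lee_fin.
  have := sub_b _ dual_p; rewrite fvsE conj_p -EFinD lee_fin; lra.
split; first lra.
exists (Fw - Fp - (p.2 w - p.2 p.1)), (Cv - vs p.1 + Fp); split; [lra..| |].
- split=> // z; apply: le_trans (sub_p z).
  by rewrite fwE fpE !(dualB dual_p) -!EFinD lee_fin; lra.
- move=> zs dual_zs; apply: le_trans (conj_ge f zs p.1).
  by rewrite fvsE fpE -EFinB -EFinD lee_fin; lra.
Qed.

Hypothesis graph_neq0 : graph_subdiff f !=set0.

Let phi (p : X * (X -> R)) := vs p.1 + p.2 w - p.2 p.1.
Let f_plus_conj := fine (f w) + fine (conj f vs).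

Let phi_ub : ubound [set phi p | p in graph_subdiff f] f_plus_conj.
Proof.
by move=> _ [p Gp <-]; have [+ _] := (graph_esubdiff_sumE _ Gp).2 (lexx _); rewrite subr_ge0.
Qed.

Lemma F_subdiffE :
  F_subdiff f w vs = (sup [set vs p.1 + p.2 w - p.2 p.1 | p in graph_subdiff f])%:E.
Proof.
rewrite -ereal_sup_EFin; last 2 first.
- by exists f_plus_conj; exact: phi_ub.
- by have [p Gp] := graph_neq0; exists (phi p), p.
by rewrite /F_subdiff image_comp.
Qed.

Lemma K_subdiffE : K_subdiff f w vs =
  (fine (f w) + fine (conj f vs) - sup [set vs p.1 + p.2 w - p.2 p.1 | p in graph_subdiff f])%:E.
Proof.
have [p0 Gp0] := graph_neq0.
rewrite -inf_upper_set_subl; last 2 first.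
- by exists (phi p0), p0.
- by exists f_plus_conj; exact: phi_ub.
rewrite /K_subdiff -ereal_inf_EFin; last 2 first.
- exists 0 => e [_ [p Gp <-] le_e]; have := phi_ub (ex_intro2 _ _ p Gp erefl).
  by rewrite /phi /f_plus_conj; lra.
- by exists (f_plus_conj - phi p0), (phi p0) => //; exists p0.
congr ereal_inf; congr image; apply/funext => e; apply/propext; split.
  move=> [e0 [p [Gp sub_p]]]; exists (phi p); first by exists p.
  exact: (graph_esubdiff_sumE e Gp).1 (Logic.conj e0 sub_p).
by move=> [_ [p Gp <-] /(graph_esubdiff_sumE e Gp) [e0 sub_p]]; split => //; exists p.
Qed.

End GraphGap.

Unset Implicit Arguments.
Local Open Scope ereal_scope.

Theorem lemma4p9 (R : realType) (X : completeNormedModType R) (f : X -> \bar R) :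
  proper_fun f -> convex_fun f -> lower_semicontinuous f ->
  forall (w : X) (vs : X -> R), w \in dom f -> vs \in dom_conj f ->
    f w + conj f vs = F_subdiff f w vs + K_subdiff f w vs.
Proof.
move=> pf cf lsc_f w vs /set_mem fw /set_mem [dual_vs fvs].
have graph_neq0 := graph_subdiff_neq0 pf cf lsc_f dual_vs fvs.
rewrite (F_subdiffE pf fw fvs graph_neq0) (K_subdiffE pf fw fvs graph_neq0).
rewrite -(lty_fineK pf fw) -(fineK (conj_fin_num pf fvs)) -!EFinD.
by congr EFin; ring.
Qed.
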